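(* Let $k$ be a real division algebra, $\mathcal Z\subset k$ a discrete subring closed under conjugation, $(a_n)_{n\ge1}$ a sequence in $\mathcal Z$ and $x_0\in k$ with $x_n=T_{a_n}\cdots T_{a_1}x_0$ defined and $\|x_n\|<1$ for all $n\ge0$. Then for each $n$, \[\|T^{-1}_{a_1}\cdots T^{-1}_{a_n}0-x_0\|=\prod_{i=0}^n\|x_i\|\;\prod_{i=0}^{n-1}\|T^{-1}_{a_{i+1}}\cdots T^{-1}_{a_n}0\|,\] assuming the terms of the latter product are well-defined.
   Context: $k\in\{\mathbb{R},\mathbb{C},\mathbb{H},\mathbb{O}\}$, identified with $\mathbb{R}^d$ with Euclidean norm $\|x\|^2=x\overline x$. For $a\in\mathcal Z$, $T_ax=x^{-1}-a$ and $T_a^{-1}x=(x+a)^{-1}$. Discrete means discrete in $\mathbb{R}^d$. *)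

From Stdlib Require Import Reals.
Open Scope R_scope.

(* The real division algebras R, C, H, O are realised as the Cayley-Dickson
   algebras CD 0, CD 1, CD 2, CD 3 (dimension d = 2^m), carried by R^(2^m)
   with the Euclidean norm. *)
Fixpoint CD (m : nat) : Type :=
  match m with
  | O => R
  | S m' => (CD m' * CD m')%type
  end.

Fixpoint cd_zero (m : nat) : CD m :=
  match m return CD m with
  | O => 0
  | S m' => (cd_zero m', cd_zero m')
  end.

Fixpoint cd_one (m : nat) : CD m :=
  match m return CD m with
  | O => 1
  | S m' => (cd_one m', cd_zero m')
  end.

Fixpoint cd_add (m : nat) : CD m -> CD m -> CD m :=
  match m return CD m -> CD m -> CD m with
  | O => Rplus
  | S m' => fun x y => (cd_add m' (fst x) (fst y), cd_add m' (snd x) (snd y))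
  end.

Fixpoint cd_opp (m : nat) : CD m -> CD m :=
  match m return CD m -> CD m with
  | O => Ropp
  | S m' => fun x => (cd_opp m' (fst x), cd_opp m' (snd x))
  end.

Definition cd_sub (m : nat) (x y : CD m) : CD m := cd_add m x (cd_opp m y).

Fixpoint cd_scale (m : nat) (r : R) : CD m -> CD m :=
  match m return CD m -> CD m with
  | O => fun x => r * x
  | S m' => fun x => (cd_scale m' r (fst x), cd_scale m' r (snd x))
  end.

Fixpoint cd_conj (m : nat) : CD m -> CD m :=
  match m return CD m -> CD m with
  | O => fun x => x
  | S m' => fun x => (cd_conj m' (fst x), cd_opp m' (snd x))
  end.

(* Cayley-Dickson product: (a,b)(c,d) = (ac - conj(d) b, d a + b conj(c)) *)
Fixpoint cd_mul (m : nat) : CD m -> CD m -> CD m :=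
  match m return CD m -> CD m -> CD m with
  | O => Rmult
  | S m' => fun x y =>
      (cd_sub m' (cd_mul m' (fst x) (fst y)) (cd_mul m' (cd_conj m' (snd y)) (snd x)),
       cd_add m' (cd_mul m' (snd y) (fst x)) (cd_mul m' (snd x) (cd_conj m' (fst y))))
  end.

(* squared Euclidean norm = x conj(x) *)
Fixpoint cd_normsq (m : nat) : CD m -> R :=
  match m return CD m -> R with
  | O => fun x => x * x
  | S m' => fun x => cd_normsq m' (fst x) + cd_normsq m' (snd x)
  end.

Definition cd_norm (m : nat) (x : CD m) : R := sqrt (cd_normsq m x).

(* multiplicative inverse x^{-1} = conj(x) / ||x||^2 (meaningful for x <> 0) *)
Definition cd_inv (m : nat) (x : CD m) : CD m :=
  cd_scale m (/ cd_normsq m x) (cd_conj m x).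

Definition Tmap (m : nat) (a x : CD m) : CD m := cd_sub m (cd_inv m x) a.
Definition Tinvmap (m : nat) (a x : CD m) : CD m := cd_inv m (cd_add m x a).

(* backw m a i k = T^{-1}_{a_{i+1}} ... T^{-1}_{a_{i+k}} 0 ;
   so T^{-1}_{a_{i+1}} ... T^{-1}_{a_n} 0 = backw m a i (n - i). *)
Fixpoint backw (m : nat) (a : nat -> CD m) (i k : nat) : CD m :=
  match k with
  | O => cd_zero m
  | S k' => Tinvmap m (a (S i)) (backw m a (S i) k')
  end.

Fixpoint prodR (f : nat -> R) (n : nat) : R :=
  match n with
  | O => 1
  | S n' => prodR f n' * f n'
  end.

Definition is_subring (m : nat) (Z : CD m -> Prop) : Prop :=
  Z (cd_zero m) /\ Z (cd_one m) /\
  (forall x y, Z x -> Z y -> Z (cd_add m x y)) /\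
  (forall x, Z x -> Z (cd_opp m x)) /\
  (forall x y, Z x -> Z y -> Z (cd_mul m x y)).

Definition is_discrete (m : nat) (Z : CD m -> Prop) : Prop :=
  forall z, Z z -> exists eps, 0 < eps /\
    forall w, Z w -> cd_norm m (cd_sub m w z) < eps -> w = z.

(* Conjugation is an isometry and x |-> x / ||x||^2 is the inversion in the unit
   sphere, so the inverse u^-1 = conj(u) / ||u||^2 satisfies
   ||u^-1 - v^-1|| = ||u - v|| ||u^-1|| ||v^-1||.  Put y_i = T^-1_{a_(i+1)} ... T^-1_{a_n} 0;
   then y_i = (y_(i+1) + a_(i+1))^-1 and x_i = (x_(i+1) + a_(i+1))^-1, whence
   ||y_i - x_i|| = ||x_i|| ||y_i|| ||y_(i+1) - x_(i+1)||, and this telescopes down to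
   ||y_n - x_n|| = ||0 - x_n|| = ||x_n||. *)
From Stdlib Require Import Reals Lra Lia.
Open Scope R_scope.

Fixpoint cd_dot (m : nat) : CD m -> CD m -> R :=
  match m return CD m -> CD m -> R with
  | O => fun x y => x * y
  | S m' => fun x y => cd_dot m' (fst x) (fst y) + cd_dot m' (snd x) (snd y)
  end.

Lemma cd_normsq_dot (m : nat) x : cd_normsq m x = cd_dot m x x.
Proof. induction m; simpl; [ring | rewrite !IHm; ring]. Qed.

Lemma cd_dot_comm (m : nat) x y : cd_dot m x y = cd_dot m y x.
Proof. induction m; simpl; [ring | rewrite (IHm (fst x)), (IHm (snd x)); ring]. Qed.

Lemma cd_dot_zero_l (m : nat) x : cd_dot m (cd_zero m) x = 0.
Proof. induction m; simpl; [ring | rewrite !IHm; ring]. Qed.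

Lemma cd_dot_add_l (m : nat) x y z : cd_dot m (cd_add m x y) z = cd_dot m x z + cd_dot m y z.
Proof. induction m; simpl; [ring | rewrite !IHm; ring]. Qed.

Lemma cd_dot_opp_l (m : nat) x z : cd_dot m (cd_opp m x) z = - cd_dot m x z.
Proof. induction m; simpl; [ring | rewrite !IHm; ring]. Qed.

Lemma cd_dot_scale_l (m : nat) r x z : cd_dot m (cd_scale m r x) z = r * cd_dot m x z.
Proof. induction m; simpl; [ring | rewrite !IHm; ring]. Qed.

Lemma cd_dot_add_r (m : nat) x y z : cd_dot m z (cd_add m x y) = cd_dot m z x + cd_dot m z y.
Proof. rewrite !(cd_dot_comm m z); apply cd_dot_add_l. Qed.

Lemma cd_dot_opp_r (m : nat) x z : cd_dot m z (cd_opp m x) = - cd_dot m z x.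
Proof. rewrite !(cd_dot_comm m z); apply cd_dot_opp_l. Qed.

Lemma cd_dot_scale_r (m : nat) r x z : cd_dot m z (cd_scale m r x) = r * cd_dot m z x.
Proof. rewrite !(cd_dot_comm m z); apply cd_dot_scale_l. Qed.

Lemma cd_dot_conj (m : nat) x y : cd_dot m (cd_conj m x) (cd_conj m y) = cd_dot m x y.
Proof. induction m; simpl; [ring | rewrite IHm, cd_dot_opp_l, cd_dot_opp_r; ring]. Qed.

Lemma cd_normsq_ge0 (m : nat) x : 0 <= cd_normsq m x.
Proof.
  induction m; simpl; [nra |].
  pose proof (IHm (fst x)); pose proof (IHm (snd x)); lra.
Qed.

Lemma cd_normsq_zero (m : nat) : cd_normsq m (cd_zero m) = 0.
Proof. rewrite cd_normsq_dot; apply cd_dot_zero_l. Qed.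

Lemma cd_normsq_eq0 (m : nat) x : cd_normsq m x = 0 -> x = cd_zero m.
Proof.
  induction m; simpl; intros Hx; [nra |].
  destruct x as [p q]; simpl in *.
  pose proof (cd_normsq_ge0 m p); pose proof (cd_normsq_ge0 m q).
  rewrite (IHm p), (IHm q) by lra; reflexivity.
Qed.

Lemma cd_normsq_neq0 (m : nat) x : x <> cd_zero m -> cd_normsq m x <> 0.
Proof. intros Hx E; exact (Hx (cd_normsq_eq0 m x E)). Qed.

Lemma cd_normsq_sub (m : nat) x y :
  cd_normsq m (cd_sub m x y) = cd_normsq m x + cd_normsq m y - 2 * cd_dot m x y.
Proof.
  unfold cd_sub; rewrite !cd_normsq_dot, cd_dot_add_l, !cd_dot_add_r,
    cd_dot_opp_l, !cd_dot_opp_r, cd_dot_opp_l, (cd_dot_comm m y x).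
  ring.
Qed.

Lemma cd_normsq_scale (m : nat) r x : cd_normsq m (cd_scale m r x) = r * r * cd_normsq m x.
Proof. rewrite !cd_normsq_dot, cd_dot_scale_l, cd_dot_scale_r; ring. Qed.

Lemma cd_normsq_conj (m : nat) x : cd_normsq m (cd_conj m x) = cd_normsq m x.
Proof. rewrite !cd_normsq_dot; apply cd_dot_conj. Qed.

Lemma cd_norm_zero_sub (m : nat) x : cd_norm m (cd_sub m (cd_zero m) x) = cd_norm m x.
Proof.
  unfold cd_norm; rewrite cd_normsq_sub, cd_normsq_zero, cd_dot_zero_l.
  f_equal; ring.
Qed.

Lemma cd_opp_involutive (m : nat) x : cd_opp m (cd_opp m x) = x.
Proof. induction m; simpl; [ring | rewrite !IHm; destruct x; reflexivity]. Qed.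

Lemma cd_conj_involutive (m : nat) x : cd_conj m (cd_conj m x) = x.
Proof.
  induction m; simpl; [reflexivity |].
  rewrite IHm, cd_opp_involutive; destruct x; reflexivity.
Qed.

Lemma cd_opp_scale (m : nat) r x : cd_opp m (cd_scale m r x) = cd_scale m r (cd_opp m x).
Proof. induction m; simpl; [ring | rewrite !IHm; reflexivity]. Qed.

Lemma cd_conj_scale (m : nat) r x : cd_conj m (cd_scale m r x) = cd_scale m r (cd_conj m x).
Proof. induction m; simpl; [reflexivity | rewrite IHm, cd_opp_scale; reflexivity]. Qed.

Lemma cd_scale_scale (m : nat) r s x : cd_scale m r (cd_scale m s x) = cd_scale m (r * s) x.
Proof. induction m; simpl; [ring | rewrite !IHm; reflexivity]. Qed.

Lemma cd_scale_1 (m : nat) x : cd_scale m 1 x = x.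
Proof. induction m; simpl; [ring | rewrite !IHm; destruct x; reflexivity]. Qed.

Lemma cd_sub_add_cancel (m : nat) x a : cd_add m (cd_sub m x a) a = x.
Proof. unfold cd_sub; induction m; simpl; [ring | rewrite !IHm; destruct x; reflexivity]. Qed.

Lemma cd_sub_add_add (m : nat) x y a : cd_sub m (cd_add m x a) (cd_add m y a) = cd_sub m x y.
Proof. unfold cd_sub; induction m; simpl; [ring | rewrite !IHm; reflexivity]. Qed.

Lemma cd_normsq_inv (m : nat) u :
  u <> cd_zero m -> cd_normsq m (cd_inv m u) = / cd_normsq m u.
Proof.
  intros Hu; unfold cd_inv; rewrite cd_normsq_scale, cd_normsq_conj.
  field; exact (cd_normsq_neq0 m u Hu).
Qed.

Lemma cd_inv_neq0 (m : nat) u : u <> cd_zero m -> cd_inv m u <> cd_zero m.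
Proof.
  intros Hu E; apply (Rinv_neq_0_compat _ (cd_normsq_neq0 m u Hu)).
  rewrite <- cd_normsq_inv, E by exact Hu.
  apply cd_normsq_zero.
Qed.

Lemma cd_inv_involutive (m : nat) u : u <> cd_zero m -> cd_inv m (cd_inv m u) = u.
Proof.
  intros Hu; pose proof (cd_normsq_neq0 m u Hu) as Hu2.
  unfold cd_inv at 1; rewrite cd_normsq_inv by exact Hu.
  unfold cd_inv; rewrite cd_conj_scale, cd_conj_involutive, cd_scale_scale.
  replace (/ / cd_normsq m u * / cd_normsq m u) with 1 by (field; exact Hu2).
  apply cd_scale_1.
Qed.

Lemma cd_norm_inv_sub (m : nat) u v : u <> cd_zero m -> v <> cd_zero m ->
  cd_norm m (cd_sub m (cd_inv m u) (cd_inv m v)) =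
  cd_norm m (cd_sub m u v) * cd_norm m (cd_inv m u) * cd_norm m (cd_inv m v).
Proof.
  intros Hu Hv; pose proof (cd_normsq_neq0 m u Hu); pose proof (cd_normsq_neq0 m v Hv).
  unfold cd_norm; rewrite <- !sqrt_mult by
    (try apply Rmult_le_pos; apply cd_normsq_ge0).
  f_equal.
  rewrite !cd_normsq_sub, !cd_normsq_inv by assumption.
  unfold cd_inv; rewrite cd_dot_scale_l, cd_dot_scale_r, cd_dot_conj.
  field; split; assumption.
Qed.

Lemma Tinvmap_Tmap (m : nat) a x : x <> cd_zero m -> Tinvmap m a (Tmap m a x) = x.
Proof.
  intros Hx; unfold Tinvmap, Tmap; rewrite cd_sub_add_cancel.
  exact (cd_inv_involutive m x Hx).
Qed.

Lemma Tmap_add_neq0 (m : nat) a x : x <> cd_zero m -> cd_add m (Tmap m a x) a <> cd_zero m.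
Proof. intros Hx; unfold Tmap; rewrite cd_sub_add_cancel; exact (cd_inv_neq0 m x Hx). Qed.

Lemma cd_norm_Tinvmap_sub (m : nat) a u v :
  cd_add m u a <> cd_zero m -> cd_add m v a <> cd_zero m ->
  cd_norm m (cd_sub m (Tinvmap m a u) (Tinvmap m a v)) =
  cd_norm m (cd_sub m u v) * cd_norm m (Tinvmap m a u) * cd_norm m (Tinvmap m a v).
Proof.
  intros Hu Hv; unfold Tinvmap; rewrite cd_norm_inv_sub by assumption.
  rewrite cd_sub_add_add; reflexivity.
Qed.

Lemma prodR_telescope (d f g : nat -> R) (n : nat) :
  (forall i, (i < n)%nat -> d i = f i * g i * d (S i)) ->
  d O = prodR f n * prodR g n * d n.
Proof.
  intros Hd; enough (H : forall k, (k <= n)%nat -> d O = prodR f k * prodR g k * d k)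
    by (apply H; lia).
  induction k as [|k IHk]; intros Hk; simpl; [ring |].
  rewrite IHk, (Hd k) by lia; ring.
Qed.

Theorem lemma1p4 (m : nat) (hm : (m <= 3)%nat)
  (Z : CD m -> Prop) (hZ : is_subring m Z)
  (hZconj : forall z, Z z -> Z (cd_conj m z))
  (hZdisc : is_discrete m Z)
  (a : nat -> CD m) (ha : forall n, (1 <= n)%nat -> Z (a n))
  (x0 : CD m) (x : nat -> CD m)
  (hx0 : x O = x0)
  (hxrec : forall n, x (S n) = Tmap m (a (S n)) (x n))
  (hxdef : forall n, x n <> cd_zero m)
  (hxlt : forall n, cd_norm m (x n) < 1)
  (n : nat)
  (hdef : forall j, (j < n)%nat ->
     cd_add m (backw m a (S j) (n - S j)) (a (S j)) <> cd_zero m) :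
  cd_norm m (cd_sub m (backw m a O n) x0) =
    prodR (fun i => cd_norm m (x i)) (S n) *
    prodR (fun i => cd_norm m (backw m a i (n - i))) n.
Proof.
  set (y i := backw m a i (n - i)).
  assert (Hy : forall i, (i < n)%nat -> y i = Tinvmap m (a (S i)) (y (S i))).
  { intros i Hi; unfold y; replace (n - i)%nat with (S (n - S i)) by lia; reflexivity. }
  assert (Hx : forall i, x i = Tinvmap m (a (S i)) (x (S i))).
  { intros i; rewrite hxrec; symmetry; exact (Tinvmap_Tmap m _ _ (hxdef i)). }
  rewrite <- hx0.
  replace (backw m a O n) with (y O) by (unfold y; rewrite Nat.sub_0_r; reflexivity).
  rewrite (prodR_telescope (fun i => cd_norm m (cd_sub m (y i) (x i)))
             (fun i => cd_norm m (x i)) (fun i => cd_norm m (y i)) n).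
  - replace (y n) with (cd_zero m) by (unfold y; rewrite Nat.sub_diag; reflexivity).
    rewrite cd_norm_zero_sub; simpl; unfold y; ring.
  - intros i Hi; simpl.
    rewrite (Hy i Hi), (Hx i), cd_norm_Tinvmap_sub, <- (Hy i Hi), <- (Hx i).
    + ring.
    + exact (hdef i Hi).
    + rewrite hxrec; exact (Tmap_add_neq0 m _ _ (hxdef i)).
Qed.
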